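(* Let $G$ be a topological group and let $H$ and $K$ be open subgroups of $G$ which are Hecke subgroups of $G$ and are commensurable. Then the discrete Hecke pair $(G,H)$ has property (RD) if and only if the discrete Hecke pair $(G,K)$ has property (RD).
   Context: $H$ is a Hecke subgroup of $G$ if $[H:H\cap xHx^{-1}]<\infty$ for all $x\in G$; $H,K$ are commensurable if $H\cap K$ has finite index in both. For a discrete Hecke pair $(G,H)$, the Hecke algebra $\mathcal H(G,H)$ consists of finitely supported functions $f$ on $H\backslash G$ which are right $H$-invariant ($f(Hxh)=f(Hx)$), with product $f*g(Hx)=\sum_{Hy\in H\backslash G}f(Hxy^{-1})g(Hy)$; the left regular representation $\lambda$ acts on $\ell^2(H\backslash G)$ by $\lambda(f)\xi=f*\xi$. A length function on $(G,H)$ is a Borel function $l:G\to[0,\infty)$ with $l(e)=0$, $l(g)=l(g^{-1})$, $l(gh)\le l(g)+l(h)$ and $l|_H=0$ (so $l$ is bi-$H$-invariant). $(G,H)$ has property (RD) if there are a length function $l$ on $(G,H)$ and $s,c>0$ such that $\|\lambda(f)\|\le c\big(\sum_{Hx\in H\backslash G}|f(Hx)|^2(1+l(x))^{2s}\big)^{1/2}$ for all $f\in\mathcal H(G,H)$. *)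

From HB Require Import structures.
From mathcomp Require Import all_boot all_order all_algebra.
From mathcomp Require Import all_classical all_reals all_analysis.
From mathcomp.real_closed Require Import complex.

Set Implicit Arguments.
Unset Strict Implicit.
Unset Printing Implicit Defensive.

Import Order.TTheory GRing.Theory Num.Theory numFieldNormedType.Exports.
Local Open Scope classical_set_scope.
Local Open Scope ring_scope.

Section GroupDefs.
Variables (G : Type) (mul : G -> G -> G) (inv : G -> G) (e : G).

Definition is_group : Prop :=
  [/\ forall x y z, mul x (mul y z) = mul (mul x y) z,
      forall x, mul e x = x /\ mul x e = x
    & forall x, mul (inv x) x = e /\ mul x (inv x) = e].

Definition is_subgroup (H : set G) : Prop :=
  H e /\ (forall x y, H x -> H y -> H (mul x (inv y))).

Definition rcoset (H : set G) (x : G) : set G := [set mul h x | h in H].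
Definition lcoset (x : G) (K : set G) : set G := [set mul x k | k in K].
Definition conjset (x : G) (H : set G) : set G :=
  [set mul (mul x h) (inv x) | h in H].

Definition finite_index (H K : set G) : Prop :=
  finite_set [set lcoset a K | a in H].

Definition hecke_subgroup (H : set G) : Prop :=
  is_subgroup H /\ forall x, finite_index H (H `&` conjset x H).

Definition commensurable (H K : set G) : Prop :=
  finite_index H (H `&` K) /\ finite_index K (H `&` K).

End GroupDefs.

Definition is_topological_group (G : topologicalType)
    (mul : G -> G -> G) (inv : G -> G) (e : G) : Prop :=
  [/\ is_group mul inv e,
      continuous (fun p : G * G => mul p.1 p.2)
    & continuous inv].

(* Functions on H\G are represented as left-H-invariant functions on G; *)
(* sums over H\G are sums over a fixed transversal (one representative *)
(* per right coset Hx).                                                 *)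
Section HeckeDefs.
Variables (R : realType) (G : topologicalType).
Variables (mul : G -> G -> G) (inv : G -> G) (e : G) (H : set G).

Local Notation C := (R[i]).

Definition coset_rep (x : G) : G := xget e (rcoset mul H x).

Definition transversal : set G := [set coset_rep x | x in [set: G]].

Definition left_inv (T : Type) (f : G -> T) : Prop :=
  forall h x, H h -> f (mul h x) = f x.

Definition hecke_elem (f : G -> C) : Prop :=
  [/\ left_inv f,
      (forall h x, H h -> f (mul x h) = f x)
    & finite_set [set rcoset mul H x | x in [set x | f x != 0]]].

Definition l2sq (xi : G -> C) : \bar R :=
  (\esum_(y in transversal) ((Normc.normc (xi y)) ^+ 2)%:E)%E.

Definition in_l2 (xi : G -> C) : Prop := left_inv xi /\ (l2sq xi < +oo)%E.

(* lambda(f) xi = f * xi,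
   (f * xi)(Hx) = sum_{Hy in H\G} f(H x y^-1) xi(Hy)
   (for f in the Hecke algebra and H Hecke, only finitely many terms
   are nonzero) *)
Definition hconv (f xi : G -> C) : G -> C :=
  fun x => \sum_(y \in transversal) f (mul x (inv y)) * xi y.

Definition length_function (l : G -> R) : Prop :=
  [/\ (forall x, 0 <= l x) /\ l e = 0,
      (forall x, l x = l (inv x)),
      (forall x y, l (mul x y) <= l x + l y),
      (forall h, H h -> l h = 0)
    &
      forall B : set R, open B ->
        (<<s [set: G], @open G >>) (l @^-1` B)].

Definition weighted_norm (l : G -> R) (s : R) (f : G -> C) : R :=
  Num.sqrt (\sum_(x \in transversal)
              (Normc.normc (f x)) ^+ 2 * powR (1 + l x) (2 * s)).

(* property (RD) for the discrete Hecke pair (G,H):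
   || lambda(f) || <= c * weighted_norm, written out through the operator
   norm on l^2(H\G):  ||f * xi||^2 <= (c * weighted_norm)^2 ||xi||^2 *)
Definition property_RD : Prop :=
  exists l : G -> R, length_function l /\
  exists s c : R, 0 < s /\ 0 < c /\
    forall f : G -> C, hecke_elem f ->
    forall xi : G -> C, in_l2 xi ->
      (l2sq (hconv f xi) <= ((c * weighted_norm l s f) ^+ 2)%:E * l2sq xi)%E.

End HeckeDefs.

From Pilot Require Import Defs.
From HB Require Import structures.
From mathcomp Require Import all_boot all_order all_algebra.
From mathcomp Require Import all_classical all_reals all_analysis.
From mathcomp.real_closed Require Import complex.
From mathcomp Require Import ring lra.

Set Implicit Arguments.
Unset Strict Implicit.
Unset Printing Implicit Defensive.
Import Order.TTheory GRing.Theory Num.Theory numFieldNormedType.Exports.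
Local Open Scope classical_set_scope.
Local Open Scope ring_scope.

(** It suffices to compare (G,H) with (G,L) for a subgroup L of H of finite
    index n (and to apply this twice with L = H :&: K).  With representatives
    a_1, ..., a_n of the cosets L a_i of L in H, the cosets L a_i y (H y in
    H\G) are the cosets of L\G, so every l^2 sum over L\G is a sum over H\G
    of n-term fibre sums.

    If (G,H) has (RD) and f is in the Hecke algebra of (G,L), then
    F(x) = sum_ij |f(a_i x a_j^-1)| is in the Hecke algebra of (G,H), dominates
    |f|, and |f * xi| <= F * Xi pointwise, where Xi(y) = sum_i |xi(a_i y)|.
    Cauchy-Schwarz on these n- and n^2-term sums compares the weighted norms of
    F and f and the l^2 norms of Xi and xi, so (G,L) has (RD) with the same
    length function.

    Conversely, an element of the Hecke algebra of (G,H) belongs to that of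
    (G,L), and its convolutions over L\G are n times those over H\G.  A length
    l for (G,L) is replaced by its maximum over the double coset H x H off H,
    and by 0 on H; this is a length for (G,H), Borel because it is constant on
    the open cosets H y, and l(a_i y) <= sum_k l(a_k) + l'(y) compares the
    weighted norms. *)

Lemma fsbig_ordT (R : Type) (idx : R) (op : Monoid.com_law idx) n (F : 'I_n -> R) :
  \big[op/idx]_(i \in [set: 'I_n]) F i = \big[op/idx]_(i < n) F i.
Proof.
rewrite (@bigfs R idx op _ (index_enum 'I_n) xpredT F).
- by congr (\big[_/_]_(_ \in _) _); apply/seteqP; split=> x.
- by rewrite /index_enum -enumT enum_uniq.
- by move=> i _; rewrite mem_index_enum.
Qed.

Lemma esum_ordT (R : realType) n (F : 'I_n -> \bar R) :
  (forall i, 0 <= F i)%E -> \esum_(i in [set: 'I_n]) F i = \sum_(i < n) F i.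
Proof. by move=> F0; rewrite esum_fset ?fsbig_ordT //; exact: finite_finset. Qed.

Lemma fsbig_esum (R : realType) (T : choiceType) (P : set T) (r : T -> R) :
  (forall x, P x -> 0 <= r x) -> finite_set (P `&` [set x | r x != 0]) ->
  ((\sum_(x \in P) r x)%:E = \esum_(x in P) (r x)%:E)%E.
Proof.
move=> r0 fin.
have supp : r @^-1` [set~ 0] = [set x | r x != 0].
  by apply/seteqP; split => x /= /eqP.
rewrite fsbig_supp supp -fsumEFin // -esum_fset //; last first.
  by move=> i /set_mem [/r0 ?] _; rewrite lee_fin.
rewrite [RHS](esumID [set x | r x != 0]); last by move=> i /r0; rewrite lee_fin.
rewrite [X in (_ = _ + X)%E]esum1 ?adde0 //.
by move=> i [_ /=] /negP; rewrite negbK => /eqP ->.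
Qed.

Lemma fsbig_real_complex (R : realType) (T : choiceType) (A : set T) (g : T -> R) :
  \sum_(y \in A) (g y)%:C%C = (\sum_(y \in A) g y)%:C%C.
Proof.
have supp : A `&` (fun y => (g y)%:C%C) @^-1` [set~ 0] = A `&` g @^-1` [set~ 0].
  apply/seteqP; split => y [Ay /= gy]; split => //.
    by move=> g0; apply: gy; rewrite g0.
  by move=> [g0]; apply: gy.
have -> : finite_support 0 A (fun y => (g y)%:C%C) = finite_support 0 A g.
  by rewrite /finite_support !unlock supp.
by rewrite (raddf_sum (real_complex R)).
Qed.

Lemma real_complex_eq0 (R : realType) (r : R) : (r%:C%C == 0 :> R[i]) = (r == 0).
Proof. by apply/eqP/eqP => [[]|->]. Qed.

Section Normc.
Variable R : realType.
Local Notation normc := (@Normc.normc R).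

Lemma normc_ge0 (z : R[i]) : 0 <= normc z.
Proof. by case: z => x y; apply: sqrtr_ge0. Qed.

Lemma normc_eq0 (z : R[i]) : (normc z == 0) = (z == 0).
Proof. by apply/eqP/eqP => [/Normc.eq0_normc //|->]; exact: Normc.normc0. Qed.

Lemma normc_real (r : R) : 0 <= r -> normc r%:C%C = r.
Proof.
move=> r0; rewrite /Normc.normc /= expr0n /= addr0 sqrtr_sqr.
exact: ger0_norm.
Qed.

Lemma normc_sum_le (I : Type) (s : seq I) (P : pred I) (F : I -> R[i]) :
  normc (\sum_(i <- s | P i) F i) <= \sum_(i <- s | P i) normc (F i).
Proof.
elim: s => [|x s IH]; first by rewrite !big_nil Normc.normc0.
rewrite !big_cons; case: ifP => // _.
by apply: le_trans (le_normcD _ _) _; exact: lerD.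
Qed.

Lemma normc_fsbig_le (T : choiceType) (P : set T) (F : T -> R[i]) :
  ((normc (\sum_(x \in P) F x))%:E <= \esum_(x in P) (normc (F x))%:E)%E.
Proof.
have [fin|inf] := pselect (finite_set (P `&` F @^-1` [set~ 0])); last first.
  rewrite fsbig_dflt // Normc.normc0.
  by apply: esum_ge0 => x _; rewrite lee_fin normc_ge0.
apply: esum_ge; exists (P `&` F @^-1` [set~ 0]); first by split => // x [].
by rewrite fsumEFin // fsbig_supp lee_fin !fsbig_finite //; exact: normc_sum_le.
Qed.

End Normc.

Lemma sqr_sum_le (R : realFieldType) n (u : 'I_n -> R) :
  (\sum_(i < n) u i) ^+ 2 <= n%:R * \sum_(i < n) u i ^+ 2.
Proof.
set S2 := \sum_(i < n) u i ^+ 2.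
have amgm x y : 2 * (x * y) <= x ^+ 2 + y ^+ 2 :> R.
  by rewrite -subr_ge0 (_ : _ - _ = (x - y) ^+ 2) ?sqr_ge0 // sqrrB; ring.
have rowsum i : \sum_(j < n) (u i ^+ 2 + u j ^+ 2) = u i ^+ 2 *+ n + S2.
  by rewrite big_split /= sumr_const card_ord.
suff : 2 * (\sum_(i < n) u i) ^+ 2 <= 2 * (n%:R * S2) by rewrite ler_pM2l.
rewrite expr2 mulr_suml mulr_sumr.
apply: (@le_trans _ _ (\sum_(i < n) \sum_(j < n) (u i ^+ 2 + u j ^+ 2))).
  apply: ler_sum => i _; rewrite !mulr_sumr; apply: ler_sum => j _; exact: amgm.
rewrite (eq_bigr _ (fun i _ => rowsum i)) big_split /= sumrMnl sumr_const card_ord.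
by rewrite -/S2 -[S2 *+ n]mulr_natl -[_ + _]mulr2n -[_ *+ 2]mulr_natl.
Qed.

Lemma le_sum_ord (R : numDomainType) n (u : 'I_n -> R) j :
  (forall i, 0 <= u i) -> u j <= \sum_(i < n) u i.
Proof. by move=> u0; rewrite (bigD1 j) //= lerDl sumr_ge0. Qed.

Lemma restriction_constant_le (R : realFieldType) (c x y b N : R) : 0 <= b -> 1 <= N ->
  x ^+ 2 <= N ^+ 3 * y ^+ 2 -> (c * x) ^+ 2 * (b * N) * N <= (c * N ^+ 3 * y) ^+ 2 * b.
Proof.
move=> b0 N1 xy.
have N0 : 0 <= N := le_trans ler01 N1.
have k0 : 0 <= c ^+ 2 * b * N ^+ 2 by rewrite mulr_ge0 ?exprn_ge0 // mulr_ge0 ?sqr_ge0.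
apply: le_trans (_ : _ <= c ^+ 2 * b * N ^+ 2 * (N ^+ 3 * y ^+ 2)) _.
  rewrite (_ : _ * N = c ^+ 2 * b * N ^+ 2 * x ^+ 2); last by ring.
  by rewrite ler_wpM2l.
rewrite (_ : (c * N ^+ 3 * y) ^+ 2 * b = c ^+ 2 * b * N ^+ 2 * (N ^+ 3 * y ^+ 2) * N); last by ring.
by rewrite ler_peMr // mulr_ge0 // mulr_ge0 ?sqr_ge0 // exprn_ge0.
Qed.

Section HeckePairs.
Variables (G : topologicalType) (mul : G -> G -> G) (inv : G -> G) (e : G).
Hypothesis Hg : is_group mul inv e.
Local Notation "x ** y" := (mul x y) (at level 40, left associativity).
Local Notation rep := (coset_rep mul e).
Local Notation transv := (Defs.transversal mul e).

Lemma mulgA x y z : x ** (y ** z) = x ** y ** z. Proof. by case: Hg. Qed.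
Lemma mul1g x : e ** x = x. Proof. by case: Hg => _ /(_ x) []. Qed.
Lemma mulg1 x : x ** e = x. Proof. by case: Hg => _ /(_ x) []. Qed.
Lemma mulVg x : inv x ** x = e. Proof. by case: Hg => _ _ /(_ x) []. Qed.
Lemma mulgV x : x ** inv x = e. Proof. by case: Hg => _ _ /(_ x) []. Qed.
Lemma mulKg x y : inv x ** (x ** y) = y. Proof. by rewrite mulgA mulVg mul1g. Qed.
Lemma mulKVg x y : x ** (inv x ** y) = y. Proof. by rewrite mulgA mulgV mul1g. Qed.
Lemma mulgK x y : x ** y ** inv y = x. Proof. by rewrite -mulgA mulgV mulg1. Qed.
Lemma mulgKV x y : x ** inv y ** y = x. Proof. by rewrite -mulgA mulVg mulg1. Qed.

Lemma invg_unique x y : x ** y = e -> y = inv x.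
Proof. by move=> xy1; rewrite -(mulKg x y) xy1 mulg1. Qed.

Lemma invgK x : inv (inv x) = x.
Proof. exact/esym/invg_unique/mulVg. Qed.

Lemma invMg x y : inv (x ** y) = inv y ** inv x.
Proof. by apply/esym/invg_unique; rewrite -mulgA (mulgA y) mulgV mul1g mulgV. Qed.

Section Subgroup.
Variable S : set G.
Hypothesis sS : is_subgroup mul inv e S.

Lemma group1 : S e. Proof. by case: sS. Qed.

Lemma groupV x : S x -> S (inv x).
Proof. by case: sS => S1 SMV Sx; have := SMV _ _ S1 Sx; rewrite mul1g. Qed.

Lemma groupM x y : S x -> S y -> S (x ** y).
Proof. by case: sS => _ SMV Sx /groupV Sy; have := SMV _ _ Sx Sy; rewrite invgK. Qed.

Lemma groupVl x y : S (x ** inv y) -> S (y ** inv x).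
Proof. by move/groupV; rewrite invMg invgK. Qed.

Lemma subgroupI T : is_subgroup mul inv e T -> is_subgroup mul inv e (S `&` T).
Proof.
case: sS => S1 SMV [T1 TMV]; split=> // x y [Sx Tx] [Sy Ty].
by split; [apply: SMV|apply: TMV].
Qed.

Lemma rcoset_eq x y : S (x ** inv y) -> rcoset mul S x = rcoset mul S y.
Proof.
move=> Sxy; apply/seteqP; split=> z [h Sh <-].
  by exists (h ** (x ** inv y)); [apply: groupM|rewrite -!mulgA mulVg mulg1].
exists (h ** inv (x ** inv y)); first by apply/groupM/groupV.
by rewrite invMg invgK -!mulgA mulVg mulg1.
Qed.

Lemma lcoset_eq x y : S (inv x ** y) -> lcoset mul x S = lcoset mul y S.
Proof.
move=> Sxy; apply/seteqP; split=> z [k Sk <-].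
  exists (inv (inv x ** y) ** k); first by apply/groupM/Sk/groupV.
  by rewrite invMg invgK -!mulgA mulKVg.
by exists (inv x ** y ** k); [apply: groupM|rewrite -!mulgA mulKVg].
Qed.

Lemma coset_repP x : exists2 h, S h & rep S x = h ** x.
Proof.
have : rcoset mul S x (rep S x).
  by apply: (@xgetI _ e _ x); exists e; [apply: group1|rewrite mul1g].
by case=> h Sh <-; exists h.
Qed.

Lemma coset_rep_rel x : S (rep S x ** inv x).
Proof. by case: (coset_repP x) => h Sh ->; rewrite mulgK. Qed.

Lemma coset_rep_eq x y : S (x ** inv y) -> rep S x = rep S y.
Proof. by move=> Sxy; rewrite /coset_rep (rcoset_eq Sxy). Qed.

Lemma coset_rep_eqP x y : rep S x = rep S y -> S (x ** inv y).
Proof.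
move=> exy; have := groupM (groupVl (coset_rep_rel x)) (coset_rep_rel y).
by rewrite exy -mulgA mulKg.
Qed.

Lemma coset_repK x : rep S (rep S x) = rep S x.
Proof. exact/coset_rep_eq/coset_rep_rel. Qed.

Lemma transversalP y : transv S y <-> rep S y = y.
Proof. by split=> [[x _ <-]|Ry]; [rewrite coset_repK|exists y]. Qed.

Lemma transversal_rep x : transv S (rep S x). Proof. by exists x. Qed.

Lemma transversal_inj y y' : transv S y -> transv S y' -> S (y ** inv y') -> y = y'.
Proof. by move=> /transversalP {2}<- /transversalP {2}<-; apply: coset_rep_eq. Qed.

Lemma left_inv_rep (T : Type) (g : G -> T) x : left_inv mul S g -> g (rep S x) = g x.
Proof. by move=> gS; case: (coset_repP x) => h Sh ->; apply: gS. Qed.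

Lemma finite_cosetsE (T : eqType) (f : G -> T) (z0 : T) : left_inv mul S f ->
  finite_set [set rcoset mul S x | x in [set x | f x != z0]] <->
  finite_set (transv S `&` [set x | f x != z0]).
Proof.
move=> fS; split=> fin.
  apply: sub_finite_set (finite_image (xget e) fin) => y [Ty fy].
  by exists (rcoset mul S y); [exists y|exact/transversalP].
apply: sub_finite_set (finite_image (rcoset mul S) fin) => C [x fx <-].
exists (rep S x); first by split; [apply: transversal_rep|rewrite /= left_inv_rep].
exact/rcoset_eq/coset_rep_rel.
Qed.

Lemma esum_transversal_mulr (R : realType) (g : G -> \bar R) b :
  (forall z, 0 <= g z)%E -> left_inv mul S g ->
  \esum_(z in transv S) g (z ** b) = \esum_(z in transv S) g z.
Proof.
move=> g0 gS.
have bij : set_bij (transv S) (transv S) (fun z => rep S (z ** b)).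
  split.
  - by move=> z _; apply: transversal_rep.
  - move=> z z' /set_mem Tz /set_mem Tz' /coset_rep_eqP.
    by rewrite invMg -!mulgA mulKVg; apply: transversal_inj.
  - move=> w /transversalP Tw; exists (rep S (w ** inv b)); first exact: transversal_rep.
    rewrite -{2}Tw; apply: coset_rep_eq.
    case: (coset_repP (w ** inv b)) => h Sh ->.
    by rewrite -!mulgA mulKg mulgV mulg1.
rewrite [RHS](reindex_esum _ _ _ _ bij).
by apply: eq_esum => z _; rewrite left_inv_rep.
Qed.

Variables (R : realType) (l : G -> R).
Hypothesis l_subadd : forall x y, l (x ** y) <= l x + l y.
Hypothesis l_S : forall h, S h -> l h = 0.

Lemma length_mull h x : S h -> l (h ** x) = l x.
Proof.
move=> Sh; apply/le_anti/andP; split.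
  by apply: le_trans (l_subadd _ _) _; rewrite l_S // add0r.
rewrite -{1}(mulKg h x); apply: le_trans (l_subadd _ _) _.
by rewrite (l_S (groupV Sh)) add0r.
Qed.

Lemma length_mulr h x : S h -> l (x ** h) = l x.
Proof.
move=> Sh; apply/le_anti/andP; split.
  by apply: le_trans (l_subadd _ _) _; rewrite (l_S Sh) addr0.
rewrite -{1}(mulgK x h); apply: le_trans (l_subadd _ _) _.
by rewrite (l_S (groupV Sh)) addr0.
Qed.

End Subgroup.

(* The a i represent the right cosets L a i partitioning H, whereas finite_index
   counts left cosets: hence the inverses in exists_coset_reps. *)
Definition coset_reps (H L : set G) n (a : 'I_n -> G) : Prop :=
  [/\ forall i, H (a i),
      forall h, H h -> exists i, L (h ** inv (a i))
    & forall i j, L (a i ** inv (a j)) -> i = j].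

Section HeckeSubgroup.
Variable H : set G.
Hypothesis sH : is_subgroup mul inv e H.
Hypothesis hH : forall c, finite_index mul H (H `&` conjset mul inv c H).

(* If f(x y^-1) != z0 then x y^-1 lies in one of the finitely many cosets H c of
   the support, so y lies in c^-1 H x, which meets only [H : H :&: c H c^-1]
   cosets H y. *)
Lemma hecke_support_finite (T : eqType) (f : G -> T) (z0 : T) : left_inv mul H f ->
  finite_set (transv H `&` [set x | f x != z0]) ->
  forall x, finite_set (transv H `&` [set y | f (x ** inv y) != z0]).
Proof.
move=> fH fin x.
pose psi c (C : set G) := rep H (inv c ** inv (xget e C) ** x).
apply: (sub_finite_set _ (bigcup_finite fin (fun c _ => finite_image (psi c) (hH c)))).
move=> y [Ty fy]; set c := rep H (x ** inv y).
exists c; first by split; [apply: transversal_rep|rewrite /= (left_inv_rep sH)].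
case: (coset_repP sH (x ** inv y)) => h0 Hh0 ec.
set C := lcoset mul (inv h0) (H `&` conjset mul inv c H).
exists C; first by exists (inv h0) => //; apply: (groupV sH).
have : C (xget e C).
  apply: (@xgetI _ e _ (inv h0)); exists e; last by rewrite mulg1.
  by split; [exact: (group1 sH)|exists e; [exact: (group1 sH)|rewrite mulg1 mulgV]].
case=> m [Hm [h' Hh' em]] eb.
rewrite /psi -eb; move/(transversalP sH): Ty => <-; apply: (coset_rep_eq sH).
have exy : x ** inv y = inv h0 ** c by rewrite /c ec mulKg.
rewrite -(mulgA _ x) exy -em !invMg !invgK -!mulgA mulKg mulKVg mulVg mulg1.
exact: (groupV sH).
Qed.

End HeckeSubgroup.

Section CosetReps.
Variables (H L : set G).
Hypotheses (sH : is_subgroup mul inv e H) (sL : is_subgroup mul inv e L).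

Lemma exists_coset_reps : finite_index mul H L -> exists n (a : 'I_n -> G), coset_reps H L a.
Proof.
move=> fin; set S := [set lcoset mul b L | b in H] in fin.
set s := finmap.enum_fset (fset_set S).
have us : uniq s by apply: finmap.fset_uniq.
have memS C : (C \in s) = (C \in S) by rewrite in_fset_set.
pose C (i : 'I_(size s)) := nth set0 s i.
have CS i : S (C i) by move: (mem_nth set0 (ltn_ord i)); rewrite memS inE.
have /boolp.choice[b bH] : forall i, exists b, H b /\ lcoset mul b L = C i.
  by move=> i; case: (CS i) => b Hb Eb; exists b.
exists (size s), (fun i => inv (b i)); split.
- by move=> i; apply: (groupV sH); case: (bH i).
- move=> h Hh.
  have ins : lcoset mul (inv h) L \in s.
    by rewrite memS inE; exists (inv h) => //; apply: groupV.
  have ilt : (index (lcoset mul (inv h) L) s < size s)%N by rewrite index_mem.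
  pose i := Ordinal ilt; exists i.
  have Ci : C i = lcoset mul (inv h) L by rewrite /C nth_index.
  have : lcoset mul (inv h) L (inv h) by exists e; [apply: (group1 sL)|rewrite mulg1].
  case: (bH i) => _; rewrite Ci => <-; rewrite invgK => -[k Lk Ek].
  by rewrite -[h]invgK -Ek invMg mulgKV; apply: (groupV sL).
- move=> i j Lij; have Cij : C i = C j.
    case: (bH i) => _ <-; case: (bH j) => _ <-.
    by apply: (lcoset_eq sL); move: Lij; rewrite invgK.
  by apply/val_inj/eqP; rewrite -(nth_uniq set0 _ _ us) ?ltn_ord //; apply/eqP.
Qed.

Hypothesis LH : L `<=` H.
Variables (n : nat) (a : 'I_n -> G).
Hypothesis aR : coset_reps H L a.

Lemma coset_reps_mem i : H (a i). Proof. by case: aR. Qed.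

Lemma coset_reps_cover h : H h -> exists i, L (h ** inv (a i)).
Proof. by case: aR => _ + _; apply. Qed.

Lemma coset_reps_inj i j : L (a i ** inv (a j)) -> i = j.
Proof. by case: aR => _ _; apply. Qed.

Lemma coset_reps_trivial : exists i0, L (a i0).
Proof.
case: (coset_reps_cover (group1 sH)) => i; rewrite mul1g => /(groupV sL).
by rewrite invgK; exists i.
Qed.

Lemma coset_reps_gt0 : (0 < n)%N.
Proof. by case: coset_reps_trivial => i _; exact: leq_ltn_trans (leq0n i) (ltn_ord i). Qed.

Lemma coset_reps_perm h : H h ->
  exists2 s : 'I_n -> 'I_n, injective s & forall i, L (a i ** h ** inv (a (s i))).
Proof.
move=> Hh.
have /boolp.choice[s hs] : forall i, exists j, L (a i ** h ** inv (a j)).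
  by move=> i; apply/coset_reps_cover/(groupM sH)/Hh/coset_reps_mem.
exists s => // i i' eqs; apply: coset_reps_inj.
have := groupM sL (hs i) (groupVl sL (hs i')).
by rewrite eqs -!mulgA mulKg invMg mulKVg.
Qed.

Definition fiber_rep (p : G * 'I_n) := rep L (a p.2 ** p.1).

Lemma fiber_rep_bij : set_bij (transv H `*` [set: 'I_n]) (transv L) fiber_rep.
Proof.
split.
- by move=> p _; apply: transversal_rep.
- move=> [y i] [y' j] /set_mem [Ty _] /set_mem [Ty' _] /= /(coset_rep_eqP sL).
  rewrite invMg => Lij.
  have Hyy : H (y ** inv y').
    have := groupM sH (groupM sH (groupV sH (coset_reps_mem i)) (LH Lij)) (coset_reps_mem j).
    by rewrite -!mulgA mulKg mulVg mulg1.
  have eyy : y = y' := transversal_inj sH Ty Ty' Hyy; subst y'.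
  by move: Lij; rewrite /= -!mulgA mulKVg => /coset_reps_inj ->.
- move=> z /(transversalP sL) Tz; case: (coset_repP sH z) => h Hh ez.
  case: (coset_reps_cover (groupV sH Hh)) => i Li.
  exists (rep H z, i); first by split=> //; apply: transversal_rep.
  rewrite /fiber_rep /= -{2}Tz; apply: (coset_rep_eq sL).
  by rewrite ez -!mulgA mulgV mulg1; move/(groupV sL): Li; rewrite invMg !invgK.
Qed.

Lemma esum_transversal_fiber (R : realType) (g : G -> \bar R) :
  (forall z, 0 <= g z)%E -> left_inv mul L g ->
  \esum_(z in transv L) g z = \esum_(y in transv H) \sum_(i < n) g (a i ** y).
Proof.
move=> g0 gL; rewrite (reindex_esum _ _ _ _ fiber_rep_bij).
transitivity (\esum_(p in transv H `*` [set: 'I_n]) g (a p.2 ** p.1)).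
  by apply: eq_esum => p _; rewrite /fiber_rep (left_inv_rep sL).
rewrite -(@esum_esum R _ _ (transv H) (fun _ => [set: 'I_n]) (fun y i => g (a i ** y))) //.
by apply: eq_esum => y _; rewrite esum_ordT.
Qed.

Lemma sum_coset_reps_mull (V : nmodType) (F : G -> V) h y : H h -> left_inv mul L F ->
  \sum_(i < n) F (a i ** (h ** y)) = \sum_(i < n) F (a i ** y).
Proof.
move=> Hh FL; case: (coset_reps_perm Hh) => s sinj hs.
rewrite [RHS](reindex_inj sinj); apply: eq_bigr => i _.
have -> : a i ** (h ** y) = a i ** h ** inv (a (s i)) ** (a (s i) ** y).
  by rewrite -!mulgA mulKg.
exact: FL.
Qed.

Lemma sum_coset_reps_mulr (V : nmodType) (F : G -> V) h y : H h ->
  (forall k z, L k -> F (z ** k) = F z) ->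
  \sum_(j < n) F (y ** h ** inv (a j)) = \sum_(j < n) F (y ** inv (a j)).
Proof.
move=> Hh FL; case: (coset_reps_perm (groupV sH Hh)) => s sinj hs.
rewrite [RHS](reindex_inj sinj); apply: eq_bigr => j _.
have -> : y ** h ** inv (a j) = y ** inv (a (s j)) ** (a (s j) ** h ** inv (a j)).
  by rewrite -!mulgA mulKg.
by apply: FL; move/(groupV sL): (hs j); rewrite !invMg !invgK -!mulgA.
Qed.


Hypothesis hH : forall c, finite_index mul H (H `&` conjset mul inv c H).
Variable R : realType.
Local Notation normc := (@Normc.normc R).

Section RestrictionToSubgroup.
Variable f : G -> R[i].
Hypothesis fL : left_inv mul L f.
Hypothesis fLr : forall h x, L h -> f (x ** h) = f x.
Hypothesis f_fin : finite_set (transv L `&` [set x | f x != 0]).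

Definition bimajorant x := \sum_(i < n) \sum_(j < n) normc (f (a i ** x ** inv (a j))).

Lemma bimajorant_ge0 x : 0 <= bimajorant x.
Proof. by apply: sumr_ge0 => i _; apply: sumr_ge0 => j _; apply: normc_ge0. Qed.

Lemma bimajorant_mull h x : H h -> bimajorant (h ** x) = bimajorant x.
Proof.
move=> Hh; apply: (sum_coset_reps_mull (F := fun z => \sum_(j < n) normc (f (z ** inv (a j))))) => //.
by move=> k z Lk; apply: eq_bigr => j _; rewrite -mulgA fL.
Qed.

Lemma bimajorant_mulr h x : H h -> bimajorant (x ** h) = bimajorant x.
Proof.
move=> Hh; apply: eq_bigr => i _; under eq_bigr do rewrite mulgA.
by apply: (sum_coset_reps_mulr (F := fun z => normc (f z))) => // k z Lk; rewrite fLr.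
Qed.

Lemma normc_le_bimajorant x : normc (f x) <= bimajorant x.
Proof.
case: coset_reps_trivial => i0 Li0.
apply: le_trans (le_sum_ord i0 _) => [|i]; last by apply: sumr_ge0 => j _; apply: normc_ge0.
apply: le_trans (le_sum_ord i0 _) => [|j]; last exact: normc_ge0.
by rewrite fLr ?fL //; apply: (groupV sL).
Qed.

Lemma bimajorant_finite_support : finite_set (transv H `&` [set x | bimajorant x != 0]).
Proof.
apply: sub_finite_set (finite_image (fun p : G * 'I_n => rep H (p.1 ** a p.2))
  (finite_setX f_fin (@finite_finset _ [set: 'I_n]))).
move=> y [/(transversalP sH) Ty Fy].
have [i [j nz]] : exists i j, f (a i ** y ** inv (a j)) != 0.
  apply: contrapT => none; move: Fy => /=; rewrite /bimajorant big1 ?eqxx // => i _.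
  apply: big1 => j _; apply/eqP; rewrite normc_eq0; apply/negPn/negP => nz.
  by apply: none; exists i, j.
exists (rep L (a i ** y ** inv (a j)), j).
  by split=> //; split; [apply: transversal_rep|rewrite /= (left_inv_rep sL)].
rewrite /= -{2}Ty; apply: (coset_rep_eq sH).
case: (coset_repP sL (a i ** y ** inv (a j))) => k Lk ->.
by rewrite -!mulgA mulKg mulgV mulg1; apply/(groupM sH)/coset_reps_mem/LH.
Qed.

Definition bimajorantC x : R[i] := (bimajorant x)%:C%C.

Lemma bimajorantC_finite_support : finite_set (transv H `&` [set x | bimajorantC x != 0]).
Proof.
apply: sub_finite_set bimajorant_finite_support => x [Tx /=].
by rewrite real_complex_eq0.
Qed.

Lemma bimajorantC_hecke : hecke_elem mul H bimajorantC.
Proof.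
have FH : left_inv mul H bimajorantC by move=> h x Hh; rewrite /bimajorantC bimajorant_mull.
split=> //; first by move=> h x Hh; rewrite /bimajorantC bimajorant_mulr.
exact/(finite_cosetsE sH 0 FH)/bimajorantC_finite_support.
Qed.

Variable xi : G -> R[i].
Hypothesis xiL : left_inv mul L xi.

Definition fiber_norm y := \sum_(i < n) normc (xi (a i ** y)).

Lemma fiber_norm_ge0 y : 0 <= fiber_norm y.
Proof. by apply: sumr_ge0 => i _; apply: normc_ge0. Qed.

Lemma fiber_norm_mull h y : H h -> fiber_norm (h ** y) = fiber_norm y.
Proof.
move=> Hh; apply: (sum_coset_reps_mull (F := fun z => normc (xi z))) => //.
by move=> k z Lk; rewrite xiL.
Qed.

Definition fiber_normC y : R[i] := (fiber_norm y)%:C%C.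

Lemma fiber_normC_left_inv : left_inv mul H fiber_normC.
Proof. by move=> h y Hh; rewrite /fiber_normC fiber_norm_mull. Qed.

Definition majorant_conv x := \sum_(y \in transv H) bimajorant (x ** inv y) * fiber_norm y.

Lemma majorant_conv_ge0 x : 0 <= majorant_conv x.
Proof.
by apply: fsumr_ge0 => y _; apply: mulr_ge0; [apply: bimajorant_ge0|apply: fiber_norm_ge0].
Qed.

Lemma majorant_conv_mull h x : H h -> majorant_conv (h ** x) = majorant_conv x.
Proof. by move=> Hh; apply: eq_fsbigr => y _; rewrite -mulgA bimajorant_mull. Qed.

Lemma hconv_majorantE x :
  hconv mul inv e H bimajorantC fiber_normC x = (majorant_conv x)%:C%C.
Proof.
rewrite /hconv (eq_fsbigr (fun y => (bimajorant (x ** inv y) * fiber_norm y)%:C%C)).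
  exact: fsbig_real_complex.
by move=> y _; rewrite /bimajorantC /fiber_normC rmorphM.
Qed.

Lemma majorant_conv_finite_support x :
  finite_set (transv H `&` [set y | bimajorant (x ** inv y) * fiber_norm y != 0]).
Proof.
have := hecke_support_finite sH hH (fun h z Hh => bimajorant_mull z Hh)
  bimajorant_finite_support x.
apply: sub_finite_set => y [Ty /= nz]; split => //=.
by apply: contraNN nz => /eqP ->; rewrite mul0r.
Qed.

Lemma normc_hconv_le_majorant x : normc (hconv mul inv e L f xi x) <= majorant_conv x.
Proof.
rewrite -lee_fin; apply: le_trans (normc_fsbig_le _ _) _.
apply: le_trans (_ : _ <= \esum_(z in transv L)
    (bimajorant (x ** inv z) * normc (xi z))%:E)%E _.
  apply: le_esum => z _; rewrite lee_fin Normc.normcM.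
  by apply: ler_wpM2r; [apply: normc_ge0|apply: normc_le_bimajorant].
rewrite (esum_transversal_fiber (g := fun z => (bimajorant (x ** inv z) * normc (xi z))%:E)).
- rewrite /majorant_conv fsbig_esum; last 2 first.
  + by move=> y _; apply: mulr_ge0; [apply: bimajorant_ge0|apply: fiber_norm_ge0].
  + exact: majorant_conv_finite_support.
  apply: le_esum => y _; rewrite sumEFin lee_fin /fiber_norm mulr_sumr.
  apply: ler_sum => i _; rewrite invMg mulgA bimajorant_mulr //.
  exact/(groupV sH)/coset_reps_mem.
- move=> z; rewrite lee_fin; apply: mulr_ge0; [apply: bimajorant_ge0|apply: normc_ge0].
- move=> k z Lk; rewrite xiL // invMg mulgA bimajorant_mulr //.
  exact/(groupV sH)/LH.
Qed.

Lemma l2sq_hconv_le_majorant : (l2sq mul e L (hconv mul inv e L f xi) <=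
  \sum_(k < n) l2sq mul e H (hconv mul inv e H bimajorantC fiber_normC))%E.
Proof.
apply: le_trans (_ : _ <= \esum_(z in transv L) ((majorant_conv z) ^+ 2)%:E)%E _.
  apply: le_esum => z _; rewrite lee_fin !expr2.
  by apply: ler_pM; try apply: normc_ge0; apply: normc_hconv_le_majorant.
rewrite (esum_transversal_fiber (g := fun z => ((majorant_conv z) ^+ 2)%:E)); last 2 first.
- by move=> z; rewrite lee_fin sqr_ge0.
- by move=> k z Lk; rewrite majorant_conv_mull //; apply: LH.
rewrite esum_sum; last by move=> y i _ _; rewrite lee_fin sqr_ge0.
apply: lee_sum => k _; apply: le_esum => y _.
by rewrite hconv_majorantE normc_real ?majorant_conv_ge0 // majorant_conv_mull //; apply: coset_reps_mem.
Qed.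

Lemma l2sq_fiber_normC_le : (l2sq mul e H fiber_normC <= \sum_(k < n) l2sq mul e L xi)%E.
Proof.
rewrite /l2sq [X in (_ <= X)%E](_ : _ = \sum_(k < n) \esum_(y in transv H)
    \sum_(i < n) ((normc (xi (a i ** y))) ^+ 2)%:E); last first.
  apply: eq_bigr => k _; rewrite (esum_transversal_fiber (g := fun z => ((normc (xi z)) ^+ 2)%:E)) //.
    by move=> z; rewrite lee_fin sqr_ge0.
  by move=> k' z Lk; rewrite xiL.
rewrite -esum_sum; last by move=> y k _ _; apply: sume_ge0 => i _; rewrite lee_fin sqr_ge0.
apply: le_esum => y _.
rewrite /fiber_normC normc_real ?fiber_norm_ge0 // (eq_bigr (fun k => (\sum_(i < n) normc (xi (a i ** y)) ^+ 2)%:E)); last first.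
  by move=> k _; rewrite sumEFin.
rewrite sumEFin lee_fin sumr_const card_ord -mulr_natl.
exact: sqr_sum_le.
Qed.

Section Weights.
Variables (l : G -> R) (s : R).
Hypothesis l_subadd : forall x y, l (x ** y) <= l x + l y.
Hypothesis l_H : forall h, H h -> l h = 0.

Definition weighted_sq (F : G -> R[i]) x := normc (F x) ^+ 2 * powR (1 + l x) (2 * s).

Lemma weighted_sq_ge0 F x : 0 <= weighted_sq F x.
Proof. by apply: mulr_ge0; [apply: sqr_ge0|apply: powR_ge0]. Qed.

Lemma weight_mull h x : H h -> powR (1 + l (h ** x)) (2 * s) = powR (1 + l x) (2 * s).
Proof. by move=> Hh; rewrite (length_mull sH l_subadd l_H). Qed.

Lemma weight_mulr h x : H h -> powR (1 + l (x ** h)) (2 * s) = powR (1 + l x) (2 * s).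
Proof. by move=> Hh; rewrite (length_mulr sH l_subadd l_H). Qed.

Lemma weighted_normE (S : set G) (F : G -> R[i]) :
  finite_set (transv S `&` [set x | F x != 0]) ->
  ((weighted_norm mul e S l s F ^+ 2)%:E = \esum_(x in transv S) (weighted_sq F x)%:E)%E.
Proof.
move=> fin; rewrite /weighted_norm sqr_sqrtr; last first.
  by apply: fsumr_ge0 => x _; apply: weighted_sq_ge0.
rewrite (fsbig_esum (r := weighted_sq F)) // => [x _|]; first exact: weighted_sq_ge0.
apply: sub_finite_set fin => x [Tx /= nz]; split => //=.
by apply: contraNN nz => /eqP F0; rewrite /weighted_sq F0 Normc.normc0 expr0n mul0r.
Qed.

Lemma esum_weighted_sq_fiber j :
  (\esum_(y in transv H) \sum_(i < n) (weighted_sq f (a i ** y ** inv (a j)))%:E =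
    (weighted_norm mul e L l s f ^+ 2)%:E)%E.
Proof.
have q0 z : (0 <= (weighted_sq f z)%:E)%E by rewrite lee_fin weighted_sq_ge0.
rewrite (weighted_normE f_fin).
rewrite -(esum_transversal_fiber (g := fun z => (weighted_sq f (z ** inv (a j)))%:E)) //.
- rewrite (esum_transversal_mulr sL (g := fun z => (weighted_sq f z)%:E)) // => k z Lk.
  by rewrite /weighted_sq fL // weight_mull //; exact: LH.
- move=> k z Lk; rewrite /weighted_sq -mulgA fL // weight_mull //; exact: LH.
Qed.

(* Cauchy-Schwarz on the n^2 terms defining the majorant. *)
Lemma weighted_sq_bimajorant_le y :
  weighted_sq bimajorantC y <=
  (n * n)%:R * \sum_(j < n) \sum_(i < n) weighted_sq f (a i ** y ** inv (a j)).
Proof.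
have W_ij i j : weighted_sq f (a i ** y ** inv (a j)) =
    normc (f (a i ** y ** inv (a j))) ^+ 2 * powR (1 + l y) (2 * s).
  by rewrite /weighted_sq (weight_mulr _ (groupV sH (coset_reps_mem j)))
    (weight_mull _ (coset_reps_mem i)).
under eq_bigr => j _ do under eq_bigr => i _ do rewrite W_ij.
rewrite exchange_big /=; under eq_bigr do rewrite -mulr_suml.
rewrite -mulr_suml mulrA /weighted_sq ler_wpM2r ?powR_ge0 //.
rewrite /bimajorantC normc_real ?bimajorant_ge0 // /bimajorant.
apply: le_trans (sqr_sum_le _) _.
rewrite natrM -mulrA ler_wpM2l // mulr_sumr.
by apply: ler_sum => i _; exact: sqr_sum_le.
Qed.

Lemma weighted_norm_bimajorant_le :
  weighted_norm mul e H l s bimajorantC ^+ 2 <= n%:R ^+ 3 * weighted_norm mul e L l s f ^+ 2.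
Proof.
rewrite -lee_fin (weighted_normE bimajorantC_finite_support) EFinM.
apply: le_trans (_ : _ <= \esum_(y in transv H) \sum_(k < n * n) \sum_(j < n)
   \sum_(i < n) (weighted_sq f (a i ** y ** inv (a j)))%:E)%E _.
  apply: le_esum => y _.
  under eq_bigr => k _ do under eq_bigr => j _ do rewrite sumEFin.
  under eq_bigr => k _ do rewrite sumEFin.
  by rewrite sumEFin lee_fin sumr_const card_ord -mulr_natl; apply: weighted_sq_bimajorant_le.
have ge0 y i j : (0 <= (weighted_sq f (a i ** y ** inv (a j)))%:E)%E by rewrite lee_fin weighted_sq_ge0.
rewrite esum_sum; last by move=> y k _ _; apply: sume_ge0 => j _; apply: sume_ge0.
rewrite (eq_bigr (fun _ => \sum_(j < n) (weighted_norm mul e L l s f ^+ 2)%:E)); last first.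
  move=> k _; rewrite esum_sum; last by move=> y j _ _; apply: sume_ge0.
  by apply: eq_bigr => j _; apply: esum_weighted_sq_fiber.
rewrite !sumEFin lee_fin !sumr_const !card_ord -mulrnA -[_ *+ (n * (n * n))]mulr_natl.
by rewrite !natrM [n%:R ^+ 3]exprS expr2.
Qed.

Lemma l2sq_hconv_restriction_le (c : R) :
  (forall F, hecke_elem mul H F -> forall X, in_l2 mul e H X ->
     (l2sq mul e H (hconv mul inv e H F X) <=
       ((c * weighted_norm mul e H l s F) ^+ 2)%:E * l2sq mul e H X)%E) ->
  (l2sq mul e L xi < +oo)%E ->
  (l2sq mul e L (hconv mul inv e L f xi) <=
     ((c * n%:R ^+ 3 * weighted_norm mul e L l s f) ^+ 2)%:E * l2sq mul e L xi)%E.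
Proof.
move=> RD xi_fin.
have xi_ge0 : (0 <= l2sq mul e L xi)%E by apply: esum_ge0 => y _; rewrite lee_fin sqr_ge0.
have [b b0 Eb] : exists2 b, 0 <= b & l2sq mul e L xi = b%:E.
  by exists (fine (l2sq mul e L xi)); [apply: fine_ge0|rewrite fineK // ge0_fin_numE].
have X_le : (l2sq mul e H fiber_normC <= (b *+ n)%:E)%E.
  by apply: le_trans l2sq_fiber_normC_le _; rewrite Eb sumEFin sumr_const card_ord.
have X_l2 : in_l2 mul e H fiber_normC.
  by split; [exact: fiber_normC_left_inv|apply: le_lt_trans X_le _; rewrite ltry].
have := weighted_norm_bimajorant_le.
set wH := weighted_norm mul e H l s bimajorantC.
set wL := weighted_norm mul e L l s f => wHL.
apply: le_trans l2sq_hconv_le_majorant _.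
apply: le_trans (_ : _ <= \sum_(k < n) ((c * wH) ^+ 2 * (b *+ n))%:E)%E _.
  apply: lee_sum => k _; apply: le_trans (RD _ bimajorantC_hecke _ X_l2) _.
  by rewrite (EFinM ((c * wH) ^+ 2)); apply: lee_wpmul2l X_le; rewrite lee_fin sqr_ge0.
rewrite sumEFin Eb -EFinM lee_fin sumr_const card_ord.
rewrite -[X in X <= _]mulr_natr -[b *+ n]mulr_natr.
by apply: restriction_constant_le => //; rewrite ler1n coset_reps_gt0.
Qed.

End Weights.

End RestrictionToSubgroup.

Section ExtensionToSupergroup.
Variables (l : G -> R) (s : R).
Hypothesis l_ge0 : forall x, 0 <= l x.
Hypothesis l_sym : forall x, l x = l (inv x).
Hypothesis l_subadd : forall x y, l (x ** y) <= l x + l y.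
Hypothesis l_L : forall h, L h -> l h = 0.
Hypothesis s_ge0 : 0 <= s.

Definition bimax_length x :=
  \big[Num.max/0]_(i < n) \big[Num.max/0]_(j < n) l (a i ** x ** inv (a j)).

(* Off H, the largest value of l on the double coset H x H; on H, zero. *)
Definition induced_length x := if pselect (H x) then 0 else bimax_length x.

Lemma induced_length_in x : H x -> induced_length x = 0.
Proof. by rewrite /induced_length; case: pselect. Qed.

Lemma induced_length_notin x : ~ H x -> induced_length x = bimax_length x.
Proof. by rewrite /induced_length; case: pselect. Qed.

Lemma bimax_length_ge h x h' : H h -> H h' -> l (h ** x ** h') <= bimax_length x.
Proof.
move=> Hh Hh'.
case: (coset_reps_cover Hh) => i Li; case: (coset_reps_cover (groupV sH Hh')) => j Lj.
have -> : h ** x ** h' = h ** inv (a i) ** (a i ** x ** inv (a j)) ** (a j ** h').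
  by rewrite -!mulgA !mulKg.
rewrite (length_mulr sL l_subadd l_L); last by move/(groupVl sL): Lj; rewrite invgK.
rewrite (length_mull sL l_subadd l_L _ Li).
by apply: le_trans (le_bigmax _ _ i); exact: (le_bigmax _ (fun j => l (a i ** x ** inv (a j))) j).
Qed.

Lemma bimax_length_ge0 x : 0 <= bimax_length x.
Proof. exact: le_trans (l_ge0 _) (bimax_length_ge x (group1 sH) (group1 sH)). Qed.

Lemma bimax_length_le x y : (forall h h', H h -> H h' -> l (h ** x ** h') <= y) -> 0 <= y ->
  bimax_length x <= y.
Proof.
move=> le_y y0; apply: bigmax_le => // i _; apply: bigmax_le => // j _.
by apply: le_y; [apply: coset_reps_mem|apply/(groupV sH)/coset_reps_mem].
Qed.

Lemma induced_length_ge0 x : 0 <= induced_length x.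
Proof.
case: (pselect (H x)) => Hx; first by rewrite induced_length_in.
by rewrite induced_length_notin // bimax_length_ge0.
Qed.

Lemma bimax_length_mull_le h y : H h -> bimax_length (h ** y) <= bimax_length y.
Proof.
move=> Hh; apply: bimax_length_le (bimax_length_ge0 _) => h1 h2 Hh1 Hh2.
by rewrite mulgA; apply: bimax_length_ge => //; apply: (groupM sH).
Qed.

Lemma bimax_lengthV_le y : bimax_length (inv y) <= bimax_length y.
Proof.
apply: bimax_length_le (bimax_length_ge0 _) => h h' Hh Hh'.
by rewrite l_sym !invMg invgK mulgA; apply: bimax_length_ge; apply: (groupV sH).
Qed.

Lemma induced_lengthV x : induced_length x = induced_length (inv x).
Proof.
have HV : H x <-> H (inv x).
  by split=> [/(groupV sH)//|/(groupV sH)]; rewrite invgK.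
case: (pselect (H x)) => Hx; first by rewrite !induced_length_in //; apply/HV.
have Hix : ~ H (inv x) by move/HV.
rewrite !induced_length_notin //; apply/le_anti/andP; split; last exact: bimax_lengthV_le.
by have := bimax_lengthV_le (inv x); rewrite invgK.
Qed.

Lemma induced_length_subadd x y : induced_length (x ** y) <= induced_length x + induced_length y.
Proof.
have sum_ge0 : 0 <= induced_length x + induced_length y by rewrite addr_ge0 ?induced_length_ge0.
case: (pselect (H (x ** y))) => Hxy; first by rewrite induced_length_in.
rewrite induced_length_notin //; apply: bimax_length_le sum_ge0 => h h' Hh Hh'.
case: (pselect (H x)) => Hx.
  have nHy : ~ H y by move=> Hy; apply/Hxy/(groupM sH).
  rewrite (induced_length_in Hx) add0r induced_length_notin // mulgA.
  by apply: bimax_length_ge => //; apply: (groupM sH).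
case: (pselect (H y)) => Hy.
  rewrite (induced_length_in Hy) addr0 induced_length_notin // -!mulgA (mulgA h x).
  by apply: bimax_length_ge => //; apply: (groupM sH).
rewrite !induced_length_notin //.
apply: le_trans (_ : l (h ** x ** e) + l (e ** y ** h') <= _).
  by rewrite mulg1 mul1g -!mulgA mulgA; apply: l_subadd.
by apply: lerD; apply: bimax_length_ge => //; apply: (group1 sH).
Qed.

Lemma induced_length_mull h x : H h -> induced_length (h ** x) = induced_length x.
Proof.
move=> Hh; case: (pselect (H x)) => Hx.
  by rewrite !induced_length_in //; apply: (groupM sH).
have nHhx : ~ H (h ** x) by move=> /(groupM sH (groupV sH Hh)); rewrite mulKg.
rewrite !induced_length_notin //; apply/le_anti/andP; split; first exact: bimax_length_mull_le.
by have := bimax_length_mull_le (h ** x) (groupV sH Hh); rewrite mulKg.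
Qed.

Lemma length_le_induced i y : l (a i ** y) <= \sum_(k < n) l (a k) + induced_length y.
Proof.
case: (pselect (H y)) => Hy.
  rewrite induced_length_in // addr0.
  case: (coset_reps_cover (groupM sH (coset_reps_mem i) Hy)) => k Lk.
  rewrite -(mulgKV (a i ** y) (a k)) (length_mull sL l_subadd l_L _ Lk).
  exact: (le_sum_ord k (u := fun k => l (a k))).
rewrite induced_length_notin //; apply: ler_wpDl; first by apply: sumr_ge0.
by have := bimax_length_ge y (coset_reps_mem i) (group1 sH); rewrite mulg1.
Qed.

Section HeckeElement.
Variable f : G -> R[i].
Hypothesis fH : left_inv mul H f.
Hypothesis fHr : forall h x, H h -> f (x ** h) = f x.
Hypothesis f_fin : finite_set (transv H `&` [set x | f x != 0]).
Variable xi : G -> R[i].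
Hypothesis xiH : left_inv mul H xi.

Let fL : left_inv mul L f. Proof. by move=> h x /LH; apply: fH. Qed.

Lemma restricted_finite_support : finite_set (transv L `&` [set x | f x != 0]).
Proof.
apply: sub_finite_set (finite_image fiber_rep (finite_setX f_fin (@finite_finset _ [set: 'I_n]))).
move=> z [Tz fz]; case: fiber_rep_bij => _ _ /(_ z Tz) [[y i] [Ty _] ez].
exists (y, i) => //; split=> //; split=> //=.
by move: fz; rewrite -ez /fiber_rep /= (left_inv_rep sL _ fL) fH //; apply: coset_reps_mem.
Qed.

Lemma hecke_elem_restrict : hecke_elem mul L f.
Proof.
split=> //; first by move=> h x /LH; apply: fHr.
exact/(finite_cosetsE sL 0 fL)/restricted_finite_support.
Qed.

Lemma hconv_mull : left_inv mul H (hconv mul inv e H f xi).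
Proof. by move=> h x Hh; apply: eq_fsbigr => y _; rewrite -mulgA fH. Qed.

Lemma hconv_restrict x : hconv mul inv e L f xi x = hconv mul inv e H f xi x *+ n.
Proof.
pose g z := f (x ** inv z) * xi z.
have gH : left_inv mul H g.
  by move=> h z Hh; rewrite /g invMg mulgA fHr ?xiH //; apply: (groupV sH).
pose D := transv H `&` [set y | g y != 0].
have D_fin : finite_set D.
  apply: sub_finite_set (hecke_support_finite sH hH fH f_fin x) => y [Ty /= gy].
  by split=> //=; apply: contraNN gy; rewrite /g => /eqP ->; rewrite mul0r.
have g0 y : transv H y -> ~ D y -> g y = 0.
  by move=> Ty nD; apply/eqP; apply: contrapT => /negP gy; apply: nD.
rewrite /hconv (reindex_fsbig fiber_rep (transv H `*` [set: 'I_n]) (transv L)); last first.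
  exact: fiber_rep_bij.
rewrite (eq_fsbigr (fun p : G * 'I_n => g p.1)); last first.
  move=> [y i] _; rewrite /fiber_rep /=.
  by rewrite -/(g (rep L (a i ** y))) (left_inv_rep sL) ?gH //; [apply: coset_reps_mem|move=> ? ? /LH; apply: gH].
rewrite -(fsbig_widen (D `*` [set: 'I_n]) _ (fun p => g p.1)); last 2 first.
- by move=> [y i] [[Ty _] _].
- by move=> [y i] [[Ty _] /= nD]; apply: g0 => // Dy; apply: nD.
rewrite -(pair_fsbig _ (fun y (i : 'I_n) => g y)) //; last exact: finite_finset.
under eq_fsbigr => y _ do rewrite fsbig_ordT sumr_const card_ord.
rewrite -(fsbig_widen D (transv H) g) //; [|by move=> y []|by move=> y [Ty nD]; apply: g0].
by rewrite !fsbig_finite // sumrMnl.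
Qed.

Lemma l2sq_restrict (F : G -> R[i]) : left_inv mul H F ->
  l2sq mul e L F = \sum_(i < n) l2sq mul e H F.
Proof.
move=> FH; rewrite /l2sq (esum_transversal_fiber (g := fun z => (normc (F z) ^+ 2)%:E)).
- rewrite esum_sum; last by move=> y i _ _; rewrite lee_fin sqr_ge0.
  by apply: eq_bigr => i _; apply: eq_esum => y _; rewrite FH //; apply: coset_reps_mem.
- by move=> z; rewrite lee_fin sqr_ge0.
- by move=> h z /LH Hh; rewrite FH.
Qed.

Lemma l2sq_hconv_le_restrict :
  (l2sq mul e H (hconv mul inv e H f xi) <= l2sq mul e L (hconv mul inv e L f xi))%E.
Proof.
have conv_mull : left_inv mul H (hconv mul inv e L f xi).
  by move=> h x Hh; rewrite !hconv_restrict hconv_mull.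
rewrite l2sq_restrict //; case: coset_reps_trivial => i0 _.
apply: le_trans (_ : _ <= l2sq mul e H (hconv mul inv e L f xi))%E _; last first.
  by rewrite (bigD1 i0) //= leeDl // sume_ge0 // => i _; apply: esum_ge0 => y _; rewrite lee_fin sqr_ge0.
apply: le_esum => y _; rewrite lee_fin hconv_restrict normcMn -mulr_natr exprMn.
by rewrite ler_peMr ?sqr_ge0 // expr_ge1 // ler1n coset_reps_gt0.
Qed.

Lemma weighted_norm_restrict_le :
  weighted_norm mul e L l s f ^+ 2 <=
  n%:R * powR (1 + \sum_(k < n) l (a k)) (2 * s) *
    weighted_norm mul e H induced_length s f ^+ 2.
Proof.
set M := \sum_(k < n) l (a k).
set P := powR (1 + M) (2 * s).
have weight_le i y : powR (1 + l (a i ** y)) (2 * s) <= P * powR (1 + induced_length y) (2 * s).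
  have M_ge0 : 0 <= M by apply: sumr_ge0.
  have l_le := length_le_induced i y; rewrite -/M in l_le.
  have l0 := l_ge0 (a i ** y); have ind0 := induced_length_ge0 y.
  rewrite -powRM; [|lra|lra].
  apply: ge0_ler_powR; rewrite ?nnegrE; first by rewrite mulr_ge0.
  - lra.
  - by apply: mulr_ge0; lra.
  - by rewrite mulrDr mulr1 mulrDl mul1r; have := mulr_ge0 M_ge0 ind0; lra.
rewrite -lee_fin (weighted_normE l s restricted_finite_support).
rewrite (esum_transversal_fiber (g := fun z => (weighted_sq l s f z)%:E)); last 2 first.
- by move=> z; rewrite lee_fin weighted_sq_ge0.
- by move=> h z Lh; rewrite /weighted_sq fL // (length_mull sL l_subadd l_L).
have -> : (n%:R * P * weighted_norm mul e H induced_length s f ^+ 2)%:E =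
    \esum_(y in transv H) (n%:R * P * weighted_sq induced_length s f y)%:E.
  rewrite /weighted_norm sqr_sqrtr; last by apply: fsumr_ge0 => x _; apply: weighted_sq_ge0.
  rewrite mulr_fsumr; apply: fsbig_esum => [y _|].
    by rewrite mulr_ge0 ?weighted_sq_ge0 // mulr_ge0 ?powR_ge0.
  apply: sub_finite_set f_fin => y [Ty /= nz]; split => //=; apply: contraNN nz => /eqP f0.
  by rewrite f0 Normc.normc0 expr0n mul0r mulr0.
apply: le_esum => y _; rewrite sumEFin lee_fin.
under eq_bigr => i _ do rewrite /weighted_sq (fH _ (coset_reps_mem i)).
apply: le_trans (_ : _ <= \sum_(i < n) normc (f y) ^+ 2 *
    (P * powR (1 + induced_length y) (2 * s))) _.
  by apply: ler_sum => i _; apply: ler_wpM2l; [apply: sqr_ge0|apply: weight_le].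
rewrite sumr_const card_ord -[_ *+ n]mulr_natl /weighted_sq.
by rewrite (_ : _ * (_ * (P * _)) = n%:R * P * (normc (f y) ^+ 2 * powR (1 + induced_length y) (2 * s))) //; ring.
Qed.

Lemma l2sq_hconv_extension_le (c : R) :
  (forall F, hecke_elem mul L F -> forall X, in_l2 mul e L X ->
     (l2sq mul e L (hconv mul inv e L F X) <=
       ((c * weighted_norm mul e L l s F) ^+ 2)%:E * l2sq mul e L X)%E) ->
  (l2sq mul e H xi < +oo)%E ->
  (l2sq mul e H (hconv mul inv e H f xi) <=
     ((c * n%:R * powR (1 + \sum_(k < n) l (a k)) s *
        weighted_norm mul e H induced_length s f) ^+ 2)%:E * l2sq mul e H xi)%E.
Proof.
move=> RD xi_fin.
have xi_ge0 : (0 <= l2sq mul e H xi)%E by apply: esum_ge0 => y _; rewrite lee_fin sqr_ge0.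
have [b b0 Eb] : exists2 b, 0 <= b & l2sq mul e H xi = b%:E.
  by exists (fine (l2sq mul e H xi)); [apply: fine_ge0|rewrite fineK // ge0_fin_numE].
have EL : l2sq mul e L xi = (b *+ n)%:E.
  by rewrite l2sq_restrict // Eb sumEFin sumr_const card_ord.
have xi_l2 : in_l2 mul e L xi by split; [move=> h x /LH; apply: xiH|rewrite EL ltry].
apply: le_trans l2sq_hconv_le_restrict _.
apply: le_trans (RD f hecke_elem_restrict xi xi_l2) _.
rewrite EL Eb -!EFinM lee_fin -[b *+ n]mulr_natr.
have := weighted_norm_restrict_le.
set M := \sum_(k < n) l (a k); set P := powR (1 + M) s.
set wL := weighted_norm mul e L l s f; set wH := weighted_norm mul e H induced_length s f.
have -> : powR (1 + M) (2 * s) = P ^+ 2.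
  have M_ge0 : 0 <= M by apply: sumr_ge0.
  rewrite expr2 -powRD ?mulr_natl ?mulr2n //.
  by apply/implyP => _; rewrite gt_eqF //; lra.
move=> wLH; apply: le_trans (_ : _ <= c ^+ 2 * (n%:R * P ^+ 2 * wH ^+ 2) * (b * n%:R)) _.
  by rewrite exprMn ler_wpM2r ?mulr_ge0 // ler_wpM2l ?sqr_ge0.
rewrite (_ : _ * (b * _) = (c * n%:R * P * wH) ^+ 2 * b) //; ring.
Qed.

End HeckeElement.

End ExtensionToSupergroup.

End CosetReps.

Section OpenSubgroup.
Hypothesis mul_cont : continuous (fun p : G * G => p.1 ** p.2).
Variable H : set G.
Hypotheses (sH : is_subgroup mul inv e H) (H_open : open H).

Lemma continuous_mulr c : continuous (fun z => z ** c).
Proof.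
move=> z; have pair_cvg : (fun z => (z, c)) @ z --> (z, c).
  by apply: cvg_pair; [exact: cvg_id|exact: cvg_cst].
exact: (cvg_comp _ _ pair_cvg (@mul_cont (z, c))).
Qed.

(* A set stable under left multiplication by H is a union of cosets H y, each open. *)
Lemma open_left_inv (A : set G) : (forall h x, H h -> A x -> A (h ** x)) -> open A.
Proof.
move=> AH; have -> : A = \bigcup_(y in A) ((fun z => z ** inv y) @^-1` H).
  apply/seteqP; split=> z; first by move=> Az; exists z => //; rewrite /= mulgV; apply: (group1 sH).
  by case=> y Ay /= Hzy; rewrite -(mulgKV z y); apply: AH.
by apply: bigcup_open => y _; apply: open_comp => // w _; apply: continuous_mulr.
Qed.

Lemma left_inv_borel (R : realType) (g : G -> R) : left_inv mul H g ->
  forall B : set R, open B -> (<<s [set: G], @open G >>) (g @^-1` B).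
Proof.
move=> gH B _; apply: sub_gen_smallest; apply: open_left_inv => h x Hh.
by rewrite /preimage /= gH.
Qed.

End OpenSubgroup.

Section FiniteIndex.
Variables (R : realType) (H L : set G).
Hypotheses (sH : is_subgroup mul inv e H) (sL : is_subgroup mul inv e L).
Hypotheses (LH : L `<=` H) (HL_fin : finite_index mul H L).
Hypothesis hH : forall c, finite_index mul H (H `&` conjset mul inv c H).

Lemma property_RD_restrict : property_RD R mul inv e H -> property_RD R mul inv e L.
Proof.
have [n [a aR]] := exists_coset_reps sH sL HL_fin.
case=> l [[[l_ge0 l_e] l_sym l_subadd l_H l_borel] [s [c [s_gt0 [c_gt0 RD]]]]].
exists l; split; first by split=> // h /LH; apply: l_H.
exists s, (c * n%:R ^+ 3); do 2 split => //.
  by rewrite mulr_gt0 // exprn_gt0 // ltr0n (coset_reps_gt0 sH sL aR).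
move=> f [fL fLr /(finite_cosetsE sL 0 fL) f_fin] xi [xiL xi_fin].
exact: (l2sq_hconv_restriction_le sH sL LH aR hH fL fLr f_fin xiL l_subadd l_H RD xi_fin).
Qed.

Lemma property_RD_extend : continuous (fun p : G * G => p.1 ** p.2) -> open H ->
  property_RD R mul inv e L -> property_RD R mul inv e H.
Proof.
move=> mul_cont H_open; have [n [a aR]] := exists_coset_reps sH sL HL_fin.
case=> l [[[l_ge0 l_e] l_sym l_subadd l_L l_borel] [s [c [s_gt0 [c_gt0 RD]]]]].
have s_ge0 := ltW s_gt0.
exists (induced_length H a l); split.
  split.
  - by split=> [x|]; [apply: (induced_length_ge0 sH sL aR)|apply/induced_length_in/(group1 sH)].
  - exact: (induced_lengthV sH sL aR l_ge0 l_sym l_subadd l_L).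
  - exact: (induced_length_subadd sH sL aR l_ge0 l_subadd l_L).
  - by move=> h; apply: induced_length_in.
  - apply: (left_inv_borel mul_cont sH H_open) => h x Hh.
    exact: (induced_length_mull sH sL aR l_ge0 l_subadd l_L).
exists s, (c * n%:R * powR (1 + \sum_(k < n) l (a k)) s); do 2 split => //.
  rewrite !mulr_gt0 ?ltr0n ?(coset_reps_gt0 sH sL aR) // powR_gt0 //.
  by rewrite ltr_pwDl // sumr_ge0.
move=> f [fH fHr /(finite_cosetsE sH 0 fH) f_fin] xi [xiH xi_fin].
exact: (l2sq_hconv_extension_le sH sL LH aR hH l_ge0 l_subadd l_L s_ge0 fH fHr f_fin xiH RD xi_fin).
Qed.

End FiniteIndex.

End HeckePairs.

Theorem corollary2p13 (R : realType) (G : topologicalType)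
    (mul : G -> G -> G) (inv : G -> G) (e : G) (H K : set G) :
  is_topological_group mul inv e ->
  open H -> open K ->
  hecke_subgroup mul inv e H -> hecke_subgroup mul inv e K ->
  commensurable mul H K ->
  (property_RD R mul inv e H <-> property_RD R mul inv e K).
Proof.
move=> [Hg mul_cont _] H_open K_open [sH hH] [sK hK] [HK_fin KH_fin].
have sHK := subgroupI sH sK.
have HK_H : H `&` K `<=` H by move=> x [].
have HK_K : H `&` K `<=` K by move=> x [].
split=> RD.
- apply: (property_RD_extend Hg sK sHK HK_K KH_fin hK mul_cont K_open).
  exact: (property_RD_restrict Hg sH sHK HK_H HK_fin hH).
- apply: (property_RD_extend Hg sH sHK HK_H HK_fin hH mul_cont H_open).
  exact: (property_RD_restrict Hg sK sHK HK_K KH_fin hK).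
Qed.
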